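(* Let $G$ be a $d$-regular graph with $n$ vertices such that $2k$ divides $dn$, where $k\ge3$ is an odd integer. Then $G$ has a $k$-star decomposition if and only if $G$ has an orientation $D$ such that $d^+_D(v)-d^-_D(v)\equiv d \pmod k$ for every $v\in V(G)$.
   Context: A $k$-star decomposition of $G$ is a partition of $E(G)$ into edge-disjoint copies of $K_{1,k}$. For an orientation $D$ of $G$, $d^+_D(v)$ and $d^-_D(v)$ denote the out-degree and in-degree of $v$. *)

From mathcomp Require Import all_boot all_order all_algebra.
Set Implicit Arguments. Unset Strict Implicit. Unset Printing Implicit Defensive.

Definition simple_graph (T : finType) (e : rel T) : Prop :=
  irreflexive e /\ symmetric e.

Definition nbhd (T : finType) (e : rel T) (v : T) : {set T} := [set u | e v u].

Definition regular (T : finType) (e : rel T) (d : nat) : Prop :=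
  forall v : T, #|nbhd e v| = d.

(* A star is a pair (center c, leaf set L); it is a copy of K_{1,k} in G
   iff #|L| = k and every leaf is adjacent to c. *)
Definition is_kstar (T : finType) (e : rel T) (k : nat) (s : T * {set T}) : bool :=
  (#|s.2| == k) && (s.2 \subset nbhd e s.1).

Definition star_has_edge (T : finType) (s : T * {set T}) (u v : T) : bool :=
  ((s.1 == u) && (v \in s.2)) || ((s.1 == v) && (u \in s.2)).

Definition kstar_decomposition (T : finType) (e : rel T) (k : nat)
  (S : {set T * {set T}}) : Prop :=
  (forall s, s \in S -> is_kstar e k s) /\
  (forall u v, e u v -> #|[set s in S | star_has_edge s u v]| = 1).

Definition has_kstar_decomposition (T : finType) (e : rel T) (k : nat) : Prop :=
  exists S : {set T * {set T}}, kstar_decomposition e k S.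

Definition orientation (T : finType) (e : rel T) (D : rel T) : Prop :=
  (forall u v, D u v -> e u v) /\ (forall u v, e u v -> D u v (+) D v u).

Definition outdeg (T : finType) (D : rel T) (v : T) : nat := #|[set u | D v u]|.
Definition indeg (T : finType) (D : rel T) (v : T) : nat := #|[set u | D u v]|.

From mathcomp Require Import all_boot all_order all_algebra zify.
Set Implicit Arguments. Unset Strict Implicit. Unset Printing Implicit Defensive.

(* Orient every edge of a k-star towards its centre: the in-degree of a vertex
   becomes k times the number of stars centred at it, so
   outdeg - indeg = d - 2 indeg is congruent to d mod k.  Conversely, as k is odd, the
   congruence forces k to divide every in-degree; cutting each in-neighbourhood
   into blocks of k vertices and centring each block at that vertex gives a
   k-star decomposition. *)

Lemma exists_subset_card (T : finType) (A : {set T}) k :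
  k <= #|A| -> exists2 B : {set T}, B \subset A & #|B| = k.
Proof.
move=> kA; exists [set x in take k (enum A)].
  by apply/subsetP=> x; rewrite inE => /mem_take; rewrite mem_enum.
by rewrite cardsE (card_uniqP _) ?take_uniq ?enum_uniq // size_takel // -cardE.
Qed.

Lemma uniform_partition_exists (T : finType) (A : {set T}) k :
  0 < k -> k %| #|A| ->
  exists P : {set {set T}}, partition P A /\ {in P, forall B : {set T}, #|B| = k}.
Proof.
move=> k0 /dvdnP[m]; elim: m A => [|m IHm] A cardA.
  exists set0; split=> [|B]; last by rewrite inE.
  by move/eqP: cardA; rewrite cards_eq0 => /eqP->; rewrite partition_set0.
have [B sBA cardB] : exists2 B : {set T}, B \subset A & #|B| = k.
  by apply: exists_subset_card; rewrite cardA mulSn leq_addr.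
have [|P [partP cardP]] := IHm (A :\: B).
  by rewrite cardsD (setIidPr sBA) cardA cardB mulSn addKn.
exists (B |: P); split.
  rewrite -(setID A B) (setIidPr sBA); apply: partitionU1 => //.
    by rewrite -card_gt0 cardB.
  by rewrite disjoint_sym disjoints_subset setDE subsetIr.
by move=> C /setU1P[->|]; [| exact: cardP].
Qed.

Section Orientation.

Variables (T : finType) (e D : rel T).
Hypotheses (e_sym : symmetric e) (orD : orientation e D).

Lemma orientation_asym u v : D u v -> D v u = false.
Proof.
case: orD => De Dx Duv; have := Dx _ _ (De _ _ Duv).
by rewrite Duv; case: (D v u).
Qed.

Lemma outdeg_add_indeg v : outdeg D v + indeg D v = #|nbhd e v|.
Proof.
case: orD => De Dx; rewrite /outdeg /indeg -cardsUI.
have -> : [set u | D v u] :&: [set u | D u v] = set0.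
  apply/setP=> u; rewrite !inE; apply/negbTE/andP=> -[Dvu].
  by rewrite (orientation_asym Dvu).
rewrite cards0 addn0; apply: eq_card => u; rewrite !inE.
apply/orP/idP=> [[/De // | /De]|/Dx]; first by rewrite e_sym.
by case: (D v u); [left | right].
Qed.

End Orientation.

Lemma outdeg_sub_indeg_mod (k d o i : nat) : odd k -> o + i = d ->
  ((o%:Z - i%:Z)%R = d%:Z %[mod k%:Z])%Z <-> k %| i.
Proof.
move=> k_odd <-; rewrite (rwP eqP) eqz_mod_dvd.
have -> : (o%:Z - i%:Z - (o + i)%N%:Z = - (2 * i)%N%:Z)%R by lia.
by rewrite dvdzE abszN /= Gauss_dvdr // coprimen2 k_odd.
Qed.

Lemma star_has_edgeC (T : finType) (s : T * {set T}) u v :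
  star_has_edge s u v = star_has_edge s v u.
Proof. exact: orbC. Qed.

Section StarOrientation.

Variables (T : finType) (e : rel T) (k : nat) (S : {set T * {set T}}).
Hypotheses (e_irr : irreflexive e) (e_sym : symmetric e).
Hypothesis decS : kstar_decomposition e k S.

Definition star_orientation : rel T :=
  fun u v => [exists s in S, (s.1 == v) && (u \in s.2)].

Lemma kstar_leaf_adj s u : s \in S -> u \in s.2 -> e s.1 u.
Proof.
case: decS => Sk _ sS; have /andP[_ /subsetP sub] := Sk s sS.
by move=> /sub; rewrite inE.
Qed.

Lemma kstar_edge_unique u v s t : e u v -> s \in S -> t \in S ->
  star_has_edge s u v -> star_has_edge t u v -> s = t.
Proof.
case: decS => _ Su /Su /eqP/cards1P[r Sr] sS tS suv tuv.
have mem_r x : x \in S -> star_has_edge x u v -> x = r.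
  by move=> xS xuv; apply/set1P; rewrite -Sr inE xS xuv.
by rewrite (mem_r s sS suv) (mem_r t tS tuv).
Qed.

Lemma star_orientation_asym u v :
  star_orientation u v -> star_orientation v u = false.
Proof.
move=> /existsP[s /and3P[sS /eqP sv us]]; apply/negbTE/existsP.
move=> [t /and3P[tS /eqP tu vt]].
have evu : e v u by rewrite -sv; exact: kstar_leaf_adj.
have st : s = t.
  by apply: (kstar_edge_unique evu sS tS); rewrite /star_has_edge ?sv ?tu eqxx ?us ?vt ?orbT.
by move: evu; rewrite -sv -tu st e_irr.
Qed.

Lemma star_orientationP : orientation e star_orientation.
Proof.
split=> [u v /existsP[s /and3P[sS /eqP <- us]] | u v euv].
  by rewrite e_sym; exact: kstar_leaf_adj.
case: decS => _ /(_ u v euv) /eqP/cards1P[s /setP/(_ s)].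
rewrite !inE eqxx => /andP[sS /orP[] /andP[/eqP su vs]].
  have Dvu : star_orientation v u by apply/existsP; exists s; rewrite sS su eqxx.
  by rewrite Dvu star_orientation_asym.
have Duv : star_orientation u v by apply/existsP; exists s; rewrite sS su eqxx.
by rewrite Duv star_orientation_asym.
Qed.

Lemma dvdn_indeg_star_orientation v : 0 < k -> k %| indeg star_orientation v.
Proof.
move=> k_gt0; case: decS => Sk _.
pose P := [set s.2 | s in [set s in S | s.1 == v]].
suff partP : partition P [set u | star_orientation u v].
  rewrite /indeg (card_uniform_partition (n := k) _ partP) ?dvdn_mull //.
  by move=> _ /imsetP[s /[!inE] /andP[sS _] ->]; have /andP[/eqP] := Sk s sS.
apply/and3P; split.
- apply/eqP/setP=> u; rewrite inE; apply/bigcupP/existsP.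
    by move=> [_ /imsetP[s /[!inE] /andP[sS sv] ->] us]; exists s; rewrite sS sv.
  by move=> [s /and3P[sS sv us]]; exists s.2 => //; apply: imset_f; rewrite inE sS.
- apply/trivIsetP=> A B /imsetP[s /[!inE] /andP[sS /eqP sv] ->].
  move=> /imsetP[t /[!inE] /andP[tS /eqP tv] ->] neq_st.
  apply/pred0P=> u /=; apply/negbTE/andP=> -[us ut]; case/eqP: neq_st.
  have evu : e v u by rewrite -sv; exact: kstar_leaf_adj.
  by rewrite (kstar_edge_unique evu sS tS) // /star_has_edge ?sv ?tv eqxx ?us ?ut.
- apply/imsetP=> -[s /[!inE] /andP[sS _] s2_eq0].
  by have /andP[/eqP] := Sk s sS; rewrite -s2_eq0 cards0 => k0; rewrite -k0 in k_gt0.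
Qed.

End StarOrientation.

Section StarsOfOrientation.

Variables (T : finType) (e D : rel T) (k : nat).
Hypotheses (e_sym : symmetric e) (orD : orientation e D) (k_gt0 : 0 < k).
Hypothesis k_dvd_indeg : forall v, k %| indeg D v.

Lemma kstar_decomposition_of_orientation : has_kstar_decomposition e k.
Proof.
case: (orD) => De Dx.
have [P partP] := fin_all_exists (fun v =>
  uniform_partition_exists (A := [set u | D u v]) k_gt0 (k_dvd_indeg v)).
exists [set s | s.2 \in P s.1]; split=> [[v B] /[!inE] /= BP | u v].
  have [/partitionS sub cardP] := partP v.
  rewrite /is_kstar /= cardP // eqxx; apply/subsetP=> u /(subsetP (sub _ BP)).
  by rewrite !inE e_sym => /De.
wlog Duv : u v / D u v.
  move=> wlog_Duv euv; case Duv: (D u v); first exact: wlog_Duv.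
  have := Dx _ _ euv; rewrite Duv /= => Dvu.
  rewrite -(wlog_Duv v u) 1?e_sym //; apply: eq_card => s.
  by rewrite !inE star_has_edgeC.
move=> _; have [partPv _] := partP v.
have uPv : u \in cover (P v) by rewrite (cover_partition partPv) inE.
apply: (@eq_card1 _ (v, pblock (P v) u)) => -[c B].
rewrite !inE /star_has_edge /=; apply/idP/eqP => [|[-> ->]].
  case/andP=> BP /orP[] /andP[/eqP cE]; subst c.
    have [/partitionS sub _] := partP u.
    by move=> /(subsetP (sub _ BP)); rewrite inE (orientation_asym orD Duv).
  by move=> uB; rewrite (def_pblock (partition_trivIset partPv) BP uB).
by rewrite pblock_mem // eqxx mem_pblock uPv orbT.
Qed.

End StarsOfOrientation.

Theorem lemma6 (T : finType) (e : rel T) (d k : nat) :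
  simple_graph e -> regular e d ->
  odd k -> 3 <= k -> (2 * k %| d * #|T|)%N ->
  (has_kstar_decomposition e k <->
   exists D : rel T, orientation e D /\
     forall v : T,
       ((Posz (outdeg D v) - Posz (indeg D v))%R = Posz d %[mod Posz k])%Z).
Proof.
move=> [e_irr e_sym] e_reg k_odd k_ge3 _.
have k_gt0 : 0 < k by apply: leq_trans k_ge3.
have deg_eq_d D (orD : orientation e D) v : outdeg D v + indeg D v = d.
  by rewrite (outdeg_add_indeg e_sym orD) e_reg.
split=> [[S decS] | [D [orD modD]]].
  have orS := star_orientationP e_irr e_sym decS.
  exists (star_orientation S); split=> // v.
  apply/(outdeg_sub_indeg_mod k_odd (deg_eq_d _ orS v)).
  exact: (dvdn_indeg_star_orientation decS v k_gt0).
apply: (kstar_decomposition_of_orientation e_sym orD k_gt0) => v.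
exact/(outdeg_sub_indeg_mod k_odd (deg_eq_d _ orD v)).
Qed.
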